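(* Let $\mathcal{G}$ be a MAG with vertices $[n]$ numbered in a topological order. For each $i$, let $\mathbb{L}_i$ consist of (a) the independence $i\perp[i-1]\setminus\mathrm{mb}(i,[i])\mid\mathrm{mb}(i,[i])$, and (b) for every head $H\neq\{i\}$ whose maximal element is $i$ and every $k\in H\setminus\{i\}$, the independence $i\perp (H\cup T)\setminus(H'\cup T'\cup\{k\})\mid (H'\cup T')\setminus\{i\}$, where $H\to^{\{k\}}H'$, $T=\mathrm{tail}(H)$ and $T'=\mathrm{tail}(H')$. Then the collection $\mathbb{L}=\bigcup_i\mathbb{L}_i$ is equivalent to the collection of independences given by the ordered local Markov property for $\mathcal{G}$ (each can be derived from the other using the semi-graphoid axioms).
   Context: A MAG is an acyclic directed mixed graph (directed and bidirected edges, no directed cycles) with $\mathrm{sib}(v)\cap\mathrm{an}(v)=\emptyset$ for all $v$ and in which every nonadjacent pair is m-separated by some set. $[i]=\{1,\dots,i\}$, with ancestors having smaller labels. $\mathcal{G}_W$ is the induced subgraph, $\mathrm{dis}_W(v)$ the district of $v$ in $\mathcal{G}_W$. A set $A$ is ancestral if $\mathrm{an}(A)=A$; for ancestral $A$ and $v\in A$ with no child in $A$, $\mathrm{mb}(v,A)=(\mathrm{pa}_{\mathcal{G}_A}(\mathrm{dis}_A(v))\cup\mathrm{dis}_A(v))\setminus\{v\}$. The ordered local Markov property is the collection $v\perp A\setminus(\mathrm{mb}(v,A)\cup\{v\})\mid\mathrm{mb}(v,A)$ over all ancestral $A$ and childless $v\in A$. $\mathrm{barren}_{\mathcal{G}'}(W)=\{w\in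 W:\mathrm{de}_{\mathcal{G}'}(w)\cap W=\{w\}\}$; a nonempty $H$ is a head if $\mathrm{barren}(H)=H$ and $H$ lies in one district of $\mathcal{G}_{\mathrm{an}(H)}$; $\mathrm{tail}(H)=(\mathrm{dis}_{\mathrm{an}(H)}(H)\setminus H)\cup\mathrm{pa}(\mathrm{dis}_{\mathrm{an}(H)}(H))$. For a head $H$ with maximal element $i$ and $\emptyset\ne K\subseteq H\setminus\{i\}$, $H\to^KH'$ means $H'=\mathrm{barren}_{\mathcal{G}'}(\mathrm{dis}_{\mathcal{G}'}(i))$ with $\mathcal{G}'=\mathcal{G}_{\mathrm{an}(H)\setminus K}$. Semi-graphoid axioms: symmetry $X\perp Y|Z\iff Y\perp X|Z$; decomposition $X\perp YW|Z\Rightarrow X\perp Y|Z$; weak union $X\perp YW|Z\Rightarrow X\perp W|YZ$; contraction $X\perp Y|Z\ \&\ X\perp W|YZ\Rightarrow X\perp YW|Z$. *)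

(* Vertices of a MAG on [n] are represented by 'I_n:
   the vertex with label l in {1..n} is the ordinal l-1. *)
From mathcomp Require Import all_boot.
Set Implicit Arguments. Unset Strict Implicit. Unset Printing Implicit Defensive.

Section MAG.
Variable n : nat.
Notation V := 'I_n.
(* dir u v : there is a directed edge u -> v ;  bi u v : bidirected edge u <-> v *)
Variables (dir bi : rel V).

Definition adj (u v : V) : bool := [|| dir u v, dir v u | bi u v].
Definition collider (u v w : V) : bool :=
  (dir u v || bi u v) && (dir w v || bi w v).

Definition an (A : {set V}) : {set V} :=
  [set u | [exists v in A, connect dir u v]].
Definition ancestral (A : {set V}) : Prop := an A = A.

Definition mconnecting (a b : V) (Z : {set V}) (p : seq V) : Prop :=
  let s := a :: p in
  [/\ last a p = b, uniq s, path adj a p &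
   forall j, 0 < j < (size s).-1 ->
     let u := nth a s j.-1 in let v := nth a s j in let w := nth a s j.+1 in
     (collider u v w -> v \in an Z) /\ (~~ collider u v w -> v \notin Z)].

Definition msep (a b : V) (Z : {set V}) : Prop :=
  ~ exists p : seq V, mconnecting a b Z p.

Definition is_MAG : Prop :=
  [/\ (forall u v, bi u v = bi v u),
      (forall u v, dir u v -> ~ connect dir v u),
      (forall u v, bi u v -> ~ connect dir u v) &
      (forall u v, u != v -> ~~ adj u v ->
         exists Z : {set V}, [/\ u \notin Z, v \notin Z & msep u v Z])].

Definition topological : Prop := forall u v : V, dir u v -> u < v.

Definition dirW (W : {set V}) : rel V := [rel x y | [&& dir x y, x \in W & y \in W]].
Definition biW (W : {set V}) : rel V := [rel x y | [&& bi x y, x \in W & y \in W]].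

Definition barren (W S : {set V}) : {set V} :=
  [set s in S | [forall t in S, connect (dirW W) s t ==> (t == s)]].

Definition dis (W : {set V}) (v : V) : {set V} :=
  [set u in W | (v \in W) && connect (biW W) v u].
Definition disS (W S : {set V}) : {set V} := \bigcup_(v in S) dis W v.

Definition pa (W S : {set V}) : {set V} :=
  [set u in W | [exists s in S, (s \in W) && dir u s]].

Definition childless (v : V) (A : {set V}) : Prop := forall w, w \in A -> ~~ dir v w.

Definition mb (v : V) (A : {set V}) : {set V} :=
  (pa A (dis A v) :|: dis A v) :\ v.

Definition head (H : {set V}) : Prop :=
  [/\ H != set0, barren setT H = H &
      forall h h', h \in H -> h' \in H -> h' \in dis (an H) h].
Definition tail (H : {set V}) : {set V} :=
  (disS (an H) H :\: H) :|: pa (an H) (disS (an H) H).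

(* H ->^K H' where i is the maximal element of H *)
Definition arrow (H K : {set V}) (i : V) : {set V} :=
  let W := an H :\: K in barren W (dis W i).

(* independence statements X _||_ Y | Z *)
Definition indep := ({set V} * {set V} * {set V})%type.

Definition OLMP (t : indep) : Prop :=
  exists (A : {set V}) (v : V),
    [/\ ancestral A, v \in A, childless v A &
        t = ([set v], A :\: (mb v A :|: [set v]), mb v A)].

(* [i] = {j | j <= i}, [i-1] = {j | j < i} *)
Definition upto (i : V) : {set V} := [set j : V | j <= i].
Definition below (i : V) : {set V} := [set j : V | j < i].

Definition Lcoll (t : indep) : Prop :=
  exists i : V,
    t = ([set i], below i :\: mb i (upto i), mb i (upto i))
    \/ exists (H : {set V}) (k : V),
         let H' := arrow H [set k] i in
         [/\ head H, H != [set i], i \in H, (forall h, h \in H -> h <= i) &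
             [/\ k \in H, k != i &
             t = ([set i], (H :|: tail H) :\: (H' :|: tail H' :|: [set k]),
                  (H' :|: tail H') :\ i)]].

(* closure under the semi-graphoid axioms (plus triviality X _||_ {} | Z) *)
Inductive derivable (S : indep -> Prop) : indep -> Prop :=
| der_ax t : S t -> derivable S t
| der_triv X Z : derivable S (X, set0, Z)
| der_sym X Y Z : derivable S (X, Y, Z) -> derivable S (Y, X, Z)
| der_dec X Y W Z : derivable S (X, Y :|: W, Z) -> derivable S (X, Y, Z)
| der_wu X Y W Z : derivable S (X, Y :|: W, Z) -> derivable S (X, W, Y :|: Z)
| der_con X Y W Z : derivable S (X, Y, Z) -> derivable S (X, W, Y :|: Z) ->
                    derivable S (X, Y :|: W, Z).

End MAG.

From Pilot Require Import Defs.
From mathcomp Require Import all_boot.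
Set Implicit Arguments. Unset Strict Implicit. Unset Printing Implicit Defensive.

(* An ordered local Markov statement reads [v _||_ A \ C | C \ {v}], where
   [C] is the district of [v] in [G_A] together with its parents
   ([dispa A v] below).

   L => OLMP: the statements of L for [[i]] are ordered local Markov
   statements, and the one for a head [H] and [k] is a decomposition of the
   ordered local Markov statement for [i] in the ancestral set [an(H) \ {k}],
   whose blanket is [(H' \cup T') \ {i}].

   OLMP => L: induction on the largest vertex [v] of [A] and, for fixed [v],
   on the number of vertices below [v] missing from [A]. For a childless
   [u <> v] the statement for [(A, u)] follows from those for [(A, v)] and
   [(A \ {v}, u)] by contraction and weak union. For [u = v] and
   [A <> [v]] add the least missing vertex [w]: the statement for [(A, v)]
   follows from those for [(A \cup {w}, v)] and [(A \cup {w} \ {v}, w)]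
   and, when [w] lies in the district of [v], from the statement of L for the
   head of that district and [k = w]. *)

(* [setdec] proves an equality or inclusion between Boolean combinations of
   sets from the inclusions and (non-)memberships in the context: it reduces
   the goal to a propositional formula about a generic point [x] whose atoms
   are memberships in the remaining set expressions. *)

Ltac bool_split :=
  simpl; first [ done
  | match goal with |- context [?a \in ?S] => case: (a \in S); bool_split end ].

Ltac abstract_sets :=
  repeat match goal with |- context [?S] =>
    lazymatch type of S with
    | {set _} =>
      lazymatch S with
      | _ :|: _ => fail | _ :&: _ => fail | _ :\: _ => fail | [set _] => fail
      | _ => tryif is_var S then fail
             else (let T := fresh "S" in set T := S; clearbody T)
      end
    end end.

Ltac setdec :=
  let x := fresh "x" in
  lazymatch goal with |- is_true (_ \subset _) => apply/setUidPr | _ => idtac end;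
  apply/setP => x; apply/eqP;
  repeat match goal with C := _ : {set _} |- _ => subst C end;
  repeat match goal with
  | H : is_true (_ \subset _) |- _ =>
      move: (introT implyP (subsetP H x)); clear H; apply/implyP
  | H : is_true (_ \in _) |- _ => revert H; apply/implyP
  | H : is_true (_ \notin _) |- _ => revert H; apply/implyP
  | H : is_true (_ != _) |- _ => revert H; apply/implyP
  end;
  abstract_sets;
  rewrite ?(in_setU, in_setI, in_setD, in_set1);
  repeat (rewrite ?eqxx; match goal with |- context [?a == ?b] =>
    lazymatch type of a with
    | bool => fail
    | _ => case: (eqVneq a b) => [->|_]
    end end);
  bool_split.

Lemma connect_restrict (T : finType) (e e' : rel T) (P : {pred T}) x y :
  x \in P -> {in P, forall a b, e a b -> (b \in P) && e' a b} ->
  connect e x y -> connect e' x y.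
Proof.
move=> Px closedP /connectP[p]; elim: p x Px => [|a p IHp] x Px /=.
  by move=> _ ->.
case/andP=> /(closedP x Px)/andP[Pa xa] ap ey.
exact: connect_trans (connect1 xa) (IHp a Pa ap ey).
Qed.

Section SemiGraphoid.
Variables (n : nat) (S : indep n -> Prop).
Implicit Types X Y Z W : {set 'I_n}.

Lemma derivable_decS X Y Z Y' :
  derivable S (X, Y, Z) -> Y' \subset Y -> derivable S (X, Y', Z).
Proof.
move=> dXYZ sY'Y; apply: (@der_dec _ _ X Y' (Y :\: Y') Z).
by have -> : Y' :|: (Y :\: Y') = Y by setdec.
Qed.

Lemma derivable_wuS X Y Z W Z' :
  derivable S (X, Y, Z) -> W \subset Y -> Z' = (Y :\: W) :|: Z ->
  derivable S (X, W, Z').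
Proof.
move=> dXYZ sWY ->; apply: der_wu.
by have -> : (Y :\: W) :|: W = Y by setdec.
Qed.

Lemma derivable_conS X Y Z W Z' Y' :
  derivable S (X, Y, Z) -> derivable S (X, W, Z') -> Z' = Y :|: Z ->
  Y' = Y :|: W -> derivable S (X, Y', Z).
Proof. by move=> dXYZ dXWZ' eZ' ->; rewrite eZ' in dXWZ'; apply: der_con. Qed.

End SemiGraphoid.

Section Graph.
Variables (n : nat) (dir bi : rel 'I_n).
Hypotheses (bi_sym : forall u v, bi u v = bi v u) (top : topological dir).
Implicit Types (A B W S H : {set 'I_n}) (i k u v w x : 'I_n).

Local Notation an := (an dir).
Local Notation ancestral := (ancestral dir).
Local Notation childless := (childless dir).
Local Notation dirW := (dirW dir).
Local Notation biW := (biW bi).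
Local Notation dis := (dis bi).
Local Notation pa := (pa dir).
Local Notation barren := (barren dir).
Local Notation is_head := (Defs.head dir bi).
Local Notation tail := (tail dir bi).
Local Notation mb := (mb dir bi).

Lemma connect_dir_leq u v : connect dir u v -> u <= v.
Proof.
case/connectP=> p; elim: p u => [|a p IHp] u /=; first by move=> _ ->.
by case/andP=> /top lt_ua pa_p /(IHp _ pa_p); apply/leq_trans/ltnW.
Qed.

Lemma connect_dir_anti u v : connect dir u v -> connect dir v u -> u = v.
Proof.
move=> /connect_dir_leq le_uv /connect_dir_leq le_vu.
by apply/val_inj/eqP; rewrite eqn_leq le_uv.
Qed.

Lemma connect_dirW_dir W u v : connect (dirW W) u v -> connect dir u v.
Proof. by apply: connect_sub => x y /andP[xy _]; apply: connect1. Qed.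

(** * Ancestral sets *)

Lemma anP A u : reflect (exists2 v, v \in A & connect dir u v) (u \in an A).
Proof. by rewrite inE; apply: (iffP exists_inP) => -[v]; exists v. Qed.

Lemma subset_an A : A \subset an A.
Proof. by apply/subsetP=> x xA; apply/anP; exists x. Qed.

Lemma anS A B : A \subset B -> an A \subset an B.
Proof.
by move=> /subsetP sAB; apply/subsetP=> x /anP[v /sAB vB xv]; apply/anP; exists v.
Qed.

Lemma ancestral_closed A u v :
  ancestral A -> connect dir u v -> v \in A -> u \in A.
Proof. by move=> ancA uv vA; rewrite -ancA; apply/anP; exists v. Qed.

Lemma ancestralP A :
  ancestral A <-> forall u v, connect dir u v -> v \in A -> u \in A.
Proof.
split=> [ancA u v|closedA]; first exact: ancestral_closed.
apply/eqP; rewrite eqEsubset subset_an andbT.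
by apply/subsetP=> u /anP[v vA uv]; apply: closedA uv vA.
Qed.

Lemma ancestral_an A : ancestral (an A).
Proof.
apply/eqP; rewrite eqEsubset subset_an andbT.
apply/subsetP=> u /anP[v /anP[w wA vw] uv].
by apply/anP; exists w; last exact: connect_trans uv vw.
Qed.

Lemma ancestral_upto i : ancestral (upto i).
Proof.
apply/ancestralP=> u v /connect_dir_leq le_uv; rewrite !inE.
exact: leq_trans.
Qed.

Lemma childless_upto A i : A \subset upto i -> childless i A.
Proof.
move=> /subsetP sAi w /sAi; rewrite inE => le_wi.
by apply/negP=> /top; rewrite ltnNge le_wi.
Qed.

Lemma childless_subset A B v : childless v A -> B \subset A -> childless v B.
Proof. by move=> cvA /subsetP sBA w /sBA; apply: cvA. Qed.

Lemma ancestral_setD1 A v : ancestral A -> childless v A -> ancestral (A :\ v).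
Proof.
move=> ancA cvA; apply/ancestralP=> x y xy; rewrite !inE => /andP[yv yA].
rewrite (ancestral_closed ancA xy yA) andbT; apply: contraNneq yv => exv.
case/connectP: xy => [[|a p] /=]; first by move=> _ ->; rewrite exv.
case/andP=> xa ap ey; have aA : a \in A.
  by apply: ancestral_closed ancA _ yA; apply/connectP; exists p.
by move: (cvA a aA); rewrite -exv xa.
Qed.

Lemma ancestral_setU1 A w :
  ancestral A -> below w \subset A -> ancestral (w |: A).
Proof.
move=> ancA /subsetP swA; apply/ancestralP=> x y xy; rewrite !inE.
case/orP=> [/eqP eyw|yA]; last by rewrite (ancestral_closed ancA xy yA) orbT.
case: (ltngtP x w) => [ltxw|ltwx|/val_inj ->]; last by rewrite eqxx.
- by rewrite swA ?orbT // inE.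
- by move: (connect_dir_leq xy); rewrite eyw leqNgt ltwx.
Qed.

Lemma childless_setU1 A w : ancestral A -> w \notin A -> childless w (w |: A).
Proof.
move=> ancA wA x; rewrite !inE => /orP[/eqP ->|xA]; apply/negP=> wx.
  by have := top wx; rewrite ltnn.
by move: wA; rewrite (ancestral_closed ancA (connect1 wx) xA).
Qed.

Lemma connect_dirW A s t :
  ancestral A -> t \in A -> connect dir s t -> connect (dirW A) s t.
Proof.
move=> ancA tA /connectP[p]; elim: p s => [|a p IHp] s /=; first by move=> _ ->.
case/andP=> sa ap et; have aA : a \in A.
  by apply: ancestral_closed ancA _ tA; apply/connectP; exists p.
have sA := ancestral_closed ancA (connect1 sa) aA.
by apply: connect_trans (IHp _ ap et); apply: connect1; apply/and3P.
Qed.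

(** * Districts and parents *)

Lemma dis_subset W v : dis W v \subset W.
Proof. by apply/subsetP=> x; rewrite inE => /andP[]. Qed.

Lemma dis_refl W v : v \in W -> v \in dis W v.
Proof. by move=> vW; rewrite inE vW connect0. Qed.

Lemma dis_mono W A v : W \subset A -> dis W v \subset dis A v.
Proof.
move=> /subsetP sWA; apply/subsetP=> x; rewrite !inE => /and3P[xW vW vx].
rewrite !sWA //=; apply: connect_sub vx => a b /and3P[ab aW bW].
by apply: connect1; apply/and3P; rewrite ab !sWA.
Qed.

Lemma biW_sym W : symmetric (biW W).
Proof. by move=> x y; rewrite /Defs.biW /= bi_sym [(x \in W) && _]andbC. Qed.

Lemma dis_eq A u v : u \in dis A v -> dis A u = dis A v.
Proof.
rewrite inE => /and3P[uA vA vu]; have sym_conn := sym_connect_sym (biW_sym A).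
apply/setP=> x; rewrite !inE uA vA /=; congr (_ && _); apply/idP/idP.
  exact: connect_trans.
by rewrite sym_conn in vu; apply: connect_trans.
Qed.

Lemma dis_restrict A W v :
  W \subset A -> v \in W -> dis A v \subset W -> dis W v = dis A v.
Proof.
move=> sWA vW /subsetP sDW; apply/eqP; rewrite eqEsubset dis_mono //=.
apply/subsetP=> x xD; rewrite inE sDW //= vW /=.
move: xD; rewrite inE => /and3P[_ vA]; apply: connect_restrict (dis_refl vA) _.
move=> a aD b ab; have bD : b \in dis A v.
  move: aD; rewrite !inE => /and3P[_ _ va]; have [_ _ bA] := and3P ab.
  by rewrite bA vA (connect_trans va (connect1 ab)).
by have [abi _ _] := and3P ab; rewrite bD; apply/and3P; rewrite abi !sDW.
Qed.

Lemma pa_subset W S : pa W S \subset W.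
Proof. by apply/subsetP=> x; rewrite inE => /andP[]. Qed.

Lemma pa_mono W A S S' : W \subset A -> S \subset S' -> pa W S \subset pa A S'.
Proof.
move=> /subsetP sWA /subsetP sSS'; apply/subsetP=> x; rewrite !inE.
case/andP=> /sWA -> /exists_inP[s /sSS' sS' /andP[/sWA sA xs]].
by apply/exists_inP; exists s; rewrite ?sA.
Qed.

Lemma pa_restrict W A S :
  ancestral W -> W \subset A -> S \subset W -> pa W S = pa A S.
Proof.
move=> ancW sWA /subsetP sSW; apply/eqP; rewrite eqEsubset pa_mono //=.
apply/subsetP=> x; rewrite !inE => /andP[_ /exists_inP[s sS /andP[_ xs]]].
rewrite (ancestral_closed ancW (connect1 xs) (sSW _ sS)) /=.
by apply/exists_inP; exists s; rewrite ?sSW.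
Qed.

Definition dispa A v : {set 'I_n} := dis A v :|: pa A (dis A v).

Lemma mbE A v : mb v A = dispa A v :\ v.
Proof. by rewrite /Defs.mb setUC. Qed.

Lemma dispa_subset A v : dispa A v \subset A.
Proof. by rewrite subUset dis_subset pa_subset. Qed.

Lemma dispa_refl A v : v \in A -> v \in dispa A v.
Proof. by move=> vA; rewrite in_setU dis_refl. Qed.

Lemma dispa_mono W A v : W \subset A -> dispa W v \subset dispa A v.
Proof. by move=> sWA; rewrite setUSS ?pa_mono ?dis_mono. Qed.

Lemma dispa_restrict W A v : ancestral W -> W \subset A -> v \in W ->
  dis A v \subset W -> dispa W v = dispa A v.
Proof.
move=> ancW sWA vW sDW.
by rewrite /dispa (dis_restrict sWA vW sDW) (pa_restrict ancW sWA sDW).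
Qed.

Lemma dispa_eq A u v : u \in dis A v -> dispa A u = dispa A v.
Proof. by rewrite /dispa => /dis_eq ->. Qed.

Lemma notin_dispa A x v : childless x A -> x \notin dis A v -> x \notin dispa A v.
Proof.
move=> cxA xD; rewrite in_setU (negbTE xD) inE /=.
apply/negP=> /andP[_ /exists_inP[s _ /andP[sA xs]]].
by move: (cxA s sA); rewrite xs.
Qed.

(** * Barren sets and heads *)

Lemma barren_subset W S : barren W S \subset S.
Proof. by apply/subsetP=> x; rewrite inE => /andP[]. Qed.

Lemma childless_barren W S x : x \in S -> childless x W -> x \in barren W S.
Proof.
move=> xS cxW; rewrite inE xS; apply/forall_inP=> t _.
apply/implyP=> /connectP[[|a p] /=]; first by move=> _ ->.
by case/andP=> /and3P[xa _ aW]; move: (cxW a aW); rewrite xa.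
Qed.

Lemma head_connect H s t :
  is_head H -> s \in H -> t \in H -> connect dir s t -> t = s.
Proof.
case=> _ barrenH _ sH tH st; move: sH; rewrite -{1}barrenH inE.
case/andP=> _ /forall_inP/(_ t tH)/implyP sinks; apply/eqP/sinks.
apply: connect_sub st => x y xy.
by apply: connect1; apply/and3P; rewrite xy !in_setT.
Qed.

(* A child [c] of [k] with [c -> ... -> h \in H] gives [k -> ... -> h], so
   [h = k] by barrenness and [c -> k -> c] is a directed cycle. *)
Lemma childless_head H k : is_head H -> k \in H -> childless k (an H).
Proof.
move=> headH kH c /anP[h hH ch]; apply/negP=> kc.
have ehk := head_connect headH kH hH (connect_trans (connect1 kc) ch).
have ekc : k = c by rewrite ehk in ch; apply: connect_dir_anti (connect1 kc) ch.
by move: kc; rewrite -ekc => /top; rewrite ltnn.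
Qed.

Lemma head_tail_subset H : H :|: tail H \subset an H.
Proof.
rewrite !subUset subset_an /= andbC pa_subset /=.
apply: subset_trans (subsetDl _ _) _; apply/bigcupsP=> h _; exact: dis_subset.
Qed.

Section DistrictHead.
Variables (A : {set 'I_n}) (v : 'I_n).
Hypotheses (ancA : ancestral A) (vA : v \in A) (cvA : childless v A).
Local Notation D := (dis A v).
Local Notation Hd := (barren A (dis A v)).

Lemma mem_barren_dis : v \in Hd.
Proof. exact: childless_barren (dis_refl vA) cvA. Qed.

(* Every vertex of the district has a descendant in [Hd]: take one of
   maximal label among its descendants in the district. *)
Lemma dis_subset_an_barren : D \subset an Hd.
Proof.
apply/subsetP=> d dD.
have [t /andP[tD dt] maxt] :=
  @arg_maxnP _ d (fun t => (t \in D) && connect (dirW A) d t) val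
    (introT andP (conj dD (connect0 _ d))).
apply/anP; exists t; last exact: connect_dirW_dir dt.
rewrite inE tD; apply/forall_inP=> t' t'D; apply/implyP=> tt'.
have le_t't : val t' <= val t by apply: maxt; rewrite t'D (connect_trans dt tt').
have le_tt' := connect_dir_leq (connect_dirW_dir tt').
by apply/eqP/val_inj/eqP; rewrite eqn_leq le_t't le_tt'.
Qed.

Lemma an_barren_subset : an Hd \subset A.
Proof.
have sHA : Hd \subset A := subset_trans (barren_subset _ _) (dis_subset _ _).
by have := anS sHA; rewrite ancA.
Qed.

Lemma dis_an_barren h : h \in Hd -> dis (an Hd) h = D.
Proof.
move=> /(subsetP (barren_subset _ _)) hD; have eD := dis_eq hD.
have hanH := subsetP dis_subset_an_barren _ hD.
by rewrite (dis_restrict an_barren_subset hanH) eD // dis_subset_an_barren.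
Qed.

Lemma head_barren_dis : is_head Hd.
Proof.
have /subsetP sHD := barren_subset A D.
split.
- by apply/set0Pn; exists v; exact: mem_barren_dis.
- apply/eqP; rewrite eqEsubset barren_subset /=; apply/subsetP=> x xH.
  rewrite inE xH; apply/forall_inP=> t tH; apply/implyP=> /connect_dirW_dir xt.
  move: xH; rewrite inE => /andP[_ /forall_inP/(_ t (sHD t tH))/implyP]; apply.
  exact: connect_dirW ancA (subsetP (dis_subset A v) t (sHD t tH)) xt.
- by move=> h h' hH /sHD; rewrite dis_an_barren.
Qed.

Lemma barren_dis_tail : Hd :|: tail Hd = dispa A v.
Proof.
have disS_Hd : disS bi (an Hd) Hd = D.
  apply/eqP; rewrite eqEsubset; apply/andP; split.
    by apply/bigcupsP=> h hH; rewrite dis_an_barren.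
  by apply: (bigcup_max v mem_barren_dis); rewrite dis_an_barren ?mem_barren_dis.
have sHD := barren_subset A D; have ancH := ancestral_an Hd.
rewrite /Defs.tail /dispa disS_Hd.
by rewrite (pa_restrict ancH an_barren_subset dis_subset_an_barren); setdec.
Qed.

End DistrictHead.

Lemma dis_subset_setD1 A u m : m \notin dis A u -> dis A u \subset A :\ m.
Proof. by move=> mD; rewrite subsetD1 dis_subset mD. Qed.

Lemma below_upto i : below i = upto i :\ i.
Proof. by apply/setP=> x; rewrite !inE ltn_neqAle val_eqE. Qed.

(** * The ordered local Markov property *)

Definition olmp_triple A v : indep n :=
  ([set v], A :\: dispa A v, dispa A v :\ v).

Lemma olmp_tripleE A v :
  v \in A -> ([set v], A :\: (mb v A :|: [set v]), mb v A) = olmp_triple A v.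
Proof. by move=> /dispa_refl vC; rewrite mbE; congr (_, _, _); setdec. Qed.

Lemma OLMP_triple A v :
  ancestral A -> v \in A -> childless v A -> OLMP dir bi (olmp_triple A v).
Proof. by move=> ancA vA cvA; exists A, v; rewrite olmp_tripleE. Qed.

Lemma upto_tripleE i :
  ([set i], below i :\: mb i (upto i), mb i (upto i)) = olmp_triple (upto i) i.
Proof.
have /dispa_refl iC : i \in upto i by rewrite inE.
by rewrite below_upto mbE; congr (_, _, _); setdec.
Qed.

Lemma derivable_OLMP_head H i k :
  is_head H -> H \subset upto i -> i \in H -> k \in H -> k != i ->
  let H' := arrow dir bi H [set k] i in
  derivable (OLMP dir bi)
    ([set i], (H :|: tail H) :\: (H' :|: tail H' :|: [set k]),
     (H' :|: tail H') :\ i).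
Proof.
move=> headH sHi iH kH ki H'; set W := an H :\ k.
have ancW : ancestral W :=
  ancestral_setD1 (ancestral_an H) (childless_head headH kH).
have iW : i \in W by rewrite in_setD1 eq_sym ki (subsetP (subset_an H)).
have ciW : childless i W.
  apply: childless_upto; apply: subset_trans (subsetDl _ _) _.
  by rewrite -(ancestral_upto i); apply: anS.
have eH'T : H' :|: tail H' = dispa W i by apply: barren_dis_tail.
rewrite eH'T; apply: derivable_decS (der_ax (OLMP_triple ancW iW ciW)) _.
have sHT := head_tail_subset H; setdec.
Qed.

Lemma derivable_OLMP_of_Lcoll (t : indep n) :
  Lcoll dir bi t -> derivable (OLMP dir bi) t.
Proof.
case=> i [->|[H [k [headH _ iH Hle [kH ki ->]]]]].
  rewrite upto_tripleE; apply/der_ax/OLMP_triple; rewrite ?inE //.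
    exact: ancestral_upto.
  exact: childless_upto.
by apply: derivable_OLMP_head => //; apply/subsetP=> h /Hle; rewrite inE.
Qed.

Lemma derivable_triple_childless (Ax : indep n -> Prop) A u m :
  ancestral A -> u \in A -> m \in A -> u != m ->
  childless u A -> childless m A ->
  derivable Ax (olmp_triple A m) -> derivable Ax (olmp_triple (A :\ m) u) ->
  derivable Ax (olmp_triple A u).
Proof.
move=> ancA uA mA um cuA cmA; rewrite /olmp_triple.
set C := dispa A u; have sCA : C \subset A := dispa_subset A u.
have uC : u \in C := dispa_refl uA.
have uAm : u \in A :\ m by rewrite in_setD1 um.
have [mD|mD] := boolP (m \in dis A u); last first.
  have -> : dispa (A :\ m) u = C.
    have ancAm := ancestral_setD1 ancA cmA.
    exact: dispa_restrict ancAm (subsetDl _ _) uAm (dis_subset_setD1 mD).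
  have mC : m \notin C := notin_dispa cmA mD.
  have uCm : u \notin dispa A m.
    by apply: notin_dispa cuA _; apply: contra mD => /dis_eq ->; apply: dis_refl.
  have sCmA := dispa_subset A m; have mCm := dispa_refl mA.
  move=> Pm Pu; have Pum : derivable Ax ([set m], [set u], A :\ u :\ m).
    by apply: derivable_wuS Pm _ _; setdec.
  by apply: derivable_conS Pu (der_sym Pum) _ _; setdec.
rewrite (dispa_eq mD) -/C; set C' := dispa (A :\ m) u => Pm Pu.
have sC'C : C' \subset C := dispa_mono u (subsetDl A [set m]).
have sC'A : C' \subset A :\ m := dispa_subset _ u.
have uC' : u \in C' := dispa_refl uAm.
have mC : m \in C by rewrite in_setU mD.
have PuR : derivable Ax ([set u], A :\: C, C :\ u :\ m).
  by apply: derivable_wuS Pu _ _; setdec.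
have PRum : derivable Ax (A :\: C, [set u] :|: [set m], C :\ u :\ m).
  by apply: derivable_conS (der_sym PuR) (der_sym Pm) _ _; setdec.
by apply/der_sym/(derivable_wuS PRum); setdec.
Qed.

Local Notation L := (Lcoll dir bi).

Lemma Lcoll_dis_head B v w :
  ancestral B -> v \in B -> B \subset upto v -> w \in dis B v -> childless w B ->
  w != v ->
  L ([set v], dispa B v :\: (dispa (B :\ w) v :|: [set w]),
     dispa (B :\ w) v :\ v).
Proof.
move=> ancB vB sBv wD cwB wv; have cvB := childless_upto sBv.
set H := barren B (dis B v).
have headH : is_head H := head_barren_dis ancB vB cvB.
have wH : w \in H := childless_barren wD cwB.
set W := an H :\ w; set A := B :\ w.
have ancW : ancestral W :=
  ancestral_setD1 (ancestral_an H) (childless_head headH wH).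
have sWA : W \subset A := setSD _ (an_barren_subset v ancB).
have vA : v \in A by rewrite in_setD1 eq_sym wv.
have sDW : dis A v \subset W.
  have sDA := dis_subset A v.
  have sDH := dis_subset_an_barren B v.
  have sDD := dis_mono v (subsetDl B [set w]).
  by setdec.
have vW : v \in W := subsetP sDW v (dis_refl vA).
have cvW : childless v W :=
  childless_subset cvB (subset_trans sWA (subsetDl _ _)).
exists v; right; exists H, w; rewrite /= (barren_dis_tail ancW vW cvW).
rewrite (dispa_restrict ancW sWA vW sDW) (barren_dis_tail ancB vB cvB).
split=> //.
- by apply: contraTneq wH => ->; rewrite in_set1.
- exact: mem_barren_dis.
- move=> h /(subsetP (barren_subset _ _))/(subsetP (dis_subset _ _)).
  by move/(subsetP sBv); rewrite inE.
Qed.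

Lemma derivable_triple_setD1 B v w :
  ancestral B -> v \in B -> B \subset upto v -> w \in B -> childless w B ->
  w != v ->
  derivable L (olmp_triple B v) -> derivable L (olmp_triple (B :\ v) w) ->
  derivable L (olmp_triple (B :\ w) v).
Proof.
move=> ancB vB sBv wB cwB wv Pv Pw; rewrite /olmp_triple in Pv Pw *.
set A := B :\ w; have ancA : ancestral A := ancestral_setD1 ancB cwB.
have vA : v \in A by rewrite in_setD1 eq_sym wv.
set C := dispa A v; set C' := dispa B v.
have sCC' : C \subset C' := dispa_mono v (subsetDl B [set w]).
have [wD|wD] := boolP (w \in dis B v); last first.
  have -> : C = C'.
    exact: dispa_restrict ancA (subsetDl _ _) vA (dis_subset_setD1 wD).
  by apply: derivable_decS Pv _; setdec.
have PL := der_ax (Lcoll_dis_head ancB vB sBv wD cwB wv).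
set Cw := dispa (B :\ v) w in Pw.
have sCwC' : Cw \subset C'.
  by rewrite /C' -(dispa_eq wD); apply: dispa_mono (subsetDl B [set v]).
have sCwB := dispa_subset (B :\ v) w; have sC'B := dispa_subset B v.
have sCA := dispa_subset A v.
have vC := dispa_refl vA; have vC' := dispa_refl vB.
have wCw : w \in Cw by apply: dispa_refl; rewrite in_setD1 wv.
have PwR : derivable L ([set w], B :\: C', C' :\ v :\ w).
  by apply: derivable_wuS Pw _ _; setdec.
have PRwv : derivable L (B :\: C', [set w] :|: [set v], C' :\ v :\ w).
  by apply: derivable_conS (der_sym PwR) (der_sym Pv) _ _; setdec.
have PvR : derivable L ([set v], B :\: C', C' :\ v :\ w).
  exact/der_sym/(derivable_decS PRwv (subsetUr _ _)).
have -> : A :\: C = (C' :\: (C :|: [set w])) :|: (B :\: C') by setdec.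
by apply: derivable_conS PL PvR _ _; setdec.
Qed.

Section MaxInduction.
Variable v : 'I_n.
Hypothesis IHv : forall B, ancestral B -> B \subset below v ->
  forall u, u \in B -> childless u B -> derivable L (olmp_triple B u).

Lemma derivable_triple_top A :
  ancestral A -> v \in A -> A \subset upto v -> derivable L (olmp_triple A v).
Proof.
have [k] := ubnP #|upto v :\: A|; elim: k A => // k IHk A ltAk ancA vA sAv.
have [->|neA] := eqVneq A (upto v).
  by apply: der_ax; exists v; left; rewrite upto_tripleE.
have /set0Pn[w0 w0m] : upto v :\: A != set0.
  by rewrite setD_eq0; apply: contra neA => sUA; rewrite eqEsubset sAv.
have [w /setDP[wv wA] minw] := @arg_minnP _ w0 [in upto v :\: A] val w0m.
have sbA : below w \subset A.
  apply/subsetP=> y; rewrite inE => ltyw; apply/idPn => yA.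
  have le_yv : y <= v by apply: leq_trans (ltnW ltyw) _; rewrite inE in wv.
  by move: (minw y); rewrite !inE yA le_yv leqNgt ltyw => /(_ isT).
set B := w |: A.
have ancB : ancestral B := ancestral_setU1 ancA sbA.
have sBv : B \subset upto v by rewrite subUset sub1set wv.
have wB : w \in B := setU11 w A.
have vB : v \in B by rewrite in_setU1 vA orbT.
have wv' : w != v by apply: contraNneq wA => ->.
have cwB : childless w B := childless_setU1 ancA wA.
have Pv : derivable L (olmp_triple B v).
  apply: IHk => //; move: ltAk; rewrite (cardsD1 w) in_setD wv wA add1n ltnS.
  by have -> : (upto v :\: A) :\ w = upto v :\: B by setdec.
have Pw : derivable L (olmp_triple (B :\ v) w).
  apply: IHv; rewrite ?in_setD1 ?wv' //.
  - exact: ancestral_setD1 (childless_upto sBv).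
  - by rewrite below_upto setSD.
  - exact: childless_subset cwB (subsetDl _ _).
have := derivable_triple_setD1 ancB vB sBv wB cwB wv' Pv Pw.
by rewrite setU1K.
Qed.

Lemma derivable_triple_upto A u :
  ancestral A -> v \in A -> A \subset upto v -> u \in A -> childless u A ->
  derivable L (olmp_triple A u).
Proof.
move=> ancA vA sAv uA cuA; have [->|uv] := eqVneq u v.
  exact: derivable_triple_top.
have cvA := childless_upto sAv.
apply: (derivable_triple_childless ancA uA vA uv cuA cvA).
  exact: derivable_triple_top.
apply: IHv; rewrite ?in_setD1 ?uv //.
- exact: ancestral_setD1.
- by rewrite below_upto setSD.
- exact: childless_subset cuA (subsetDl _ _).
Qed.

End MaxInduction.

Lemma derivable_triple A u :
  ancestral A -> u \in A -> childless u A -> derivable L (olmp_triple A u).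
Proof.
suff: forall (k : nat) A, ancestral A -> (forall x, x \in A -> x < k) ->
    forall u, u \in A -> childless u A -> derivable L (olmp_triple A u).
  move=> IH ancA uA cuA; apply: (IH n A ancA _ u uA cuA) => x _.
  exact: ltn_ord.
elim=> [|k IHk] {}A ancA ltAk {}u uA cuA; first by have := ltAk u uA.
case: (pickP [pred x in A | val x == k]) => [v /andP[vA /eqP vk]|noK].
  apply: (derivable_triple_upto (v := v)) => //.
    by move=> B ancB /subsetP sBv; apply: IHk => // x /sBv; rewrite inE vk.
  by apply/subsetP=> x /ltAk; rewrite inE ltnS vk.
apply: IHk => // x xA; move: (ltAk x xA) (noK x); rewrite ltnS leq_eqVlt /= xA.
by case: eqP.
Qed.

End Graph.

Theorem theoremD6 (n : nat) (dir bi : rel 'I_n) :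
  is_MAG dir bi -> topological dir ->
  (forall t, Lcoll dir bi t -> derivable (OLMP dir bi) t) /\
  (forall t, OLMP dir bi t -> derivable (Lcoll dir bi) t).
Proof.
case=> bi_sym _ _ _ top; split=> t.
  exact: derivable_OLMP_of_Lcoll.
case=> A [v [ancA vA cvA ->]]; rewrite olmp_tripleE //.
exact: derivable_triple.
Qed.
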